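(* A commutative loop $Q$ of finite order $n$ has a subloop of even order if and only if $n$ is even.
   Context: A loop is a set $Q$ with a binary operation (juxtaposition) and neutral element $e$ such that for all $a,b$ the equations $ax=b$, $ya=b$ have unique solutions. A subloop is a subset containing $e$ which is itself a loop under the restricted operation. *)

From mathcomp Require Import all_boot.
Set Implicit Arguments. Unset Strict Implicit. Unset Printing Implicit Defensive.

Definition is_loop (T : Type) (op : T -> T -> T) (e : T) : Prop :=
  (forall x, op e x = x /\ op x e = x) /\
  (forall a b, exists! x, op a x = b) /\
  (forall a b, exists! y, op y a = b).

Definition is_commutative (T : Type) (op : T -> T -> T) : Prop :=
  forall x y, op x y = op y x.

Definition is_subloop (T : finType) (op : T -> T -> T) (e : T) (S : {set T}) : Prop :=
  e \in S /\
  (forall a b, a \in S -> b \in S -> op a b \in S) /\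
  (forall a b, a \in S -> b \in S ->
     exists x, (x \in S /\ op a x = b) /\ forall x', x' \in S -> op a x' = b -> x' = x) /\
  (forall a b, a \in S -> b \in S ->
     exists y, (y \in S /\ op y a = b) /\ forall y', y' \in S -> op y' a = b -> y' = y).

From mathcomp Require Import all_boot.

Set Implicit Arguments.
Unset Strict Implicit.
Unset Printing Implicit Defensive.

(* Let A be a subset of a commutative loop in which each x y = b (x in A) has a
   unique solution y in A.  The swap (x, y) |-> (y, x) permutes these |A|
   solutions, and its fixed points are the square roots of b in A; hence b has
   as many square roots in A as |A| modulo 2.  If |Q| is odd every
   element has a square root, so squaring is a bijection and e is the only
   square root of e.  An even subloop S would instead contain an even number
   of square roots of e, hence one besides e. *)

Lemma odd_card_fixed_involution (T : finType) (f : T -> T) (P : {set T}) :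
  involutive f -> {in P, forall x, f x \in P} ->
  odd #|[set x in P | f x == x]| = odd #|P|.
Proof.
(* The non-fixed points split into those preceding their image in the
   enumeration order and those following it; f swaps the two halves. *)
move=> fK fP; pose r (x : T) := enum_rank x.
have fPE x : (f x \in P) = (x \in P).
  by apply/idP/idP => [/fP|/fP//]; rewrite fK.
pose F := [set x in P | f x == x].
pose O := [set x in P | r x < r (f x)].
have swapO : f @^-1: O = [set x in P | r (f x) < r x].
  by apply/setP => x; rewrite !inE fK fPE.
have cardP : #|P| = #|F| + #|O| + #|f @^-1: O|.
  rewrite -(cardsID F P) (setIidPr _); last by apply/subsetP => x /setIdP[].
  rewrite -addnA -(cardsID O (P :\: F)); congr (_ + (_ + _)); apply: eq_card => x.
    rewrite !inE; case: (x \in P) (f x =P x) => [] [fx|nfx] //=.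
    by rewrite fx ltnn.
  rewrite swapO !inE; case: (x \in P) (f x =P x) => [] [fx|nfx] //=.
    by rewrite fx ltnn.
  rewrite -leqNgt leq_eqVlt; case: ltngtP => //= /val_inj/enum_rank_inj fxE.
  by case: nfx.
rewrite cardP card_preimset; last exact: inv_inj fK.
by rewrite -addnA addnn oddD odd_double addbF.
Qed.

Lemma fin_surj_inj (T : finType) (f : T -> T) :
  (forall y, exists x, f x = y) -> injective f.
Proof.
move=> fS; have fSb y : exists x, f x == y by have [x <-] := fS y; exists x.
pose g y := xchoose (fSb y).
have gK : cancel g f by move=> y; apply/eqP/(xchooseP (fSb y)).
have fK : cancel f g.
  by move=> x; have /codomP[y ->] := injF_onto (can_inj gK) x; rewrite gK.
exact: can_inj fK.
Qed.

Lemma setT_subloop (T : finType) (op : T -> T -> T) (e : T) :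
  is_loop op e -> is_subloop op e setT.
Proof.
move=> [_ [rdiv ldiv]].
split; first exact: in_setT.
split; first by move=> a b _ _; apply: in_setT.
split=> a b _ _.
  by have [x [axb xU]] := rdiv a b; exists x; split=> // x' _ /xU.
by have [y [yab yU]] := ldiv a b; exists y; split=> // y' _ /yU.
Qed.

Section CommutativeLoop.
Variables (T : finType) (op : T -> T -> T).
Hypothesis opC : is_commutative op.

Lemma odd_card_sqrt (A : {set T}) (b : T) :
  (forall a, a \in A -> exists x, (x \in A /\ op a x = b) /\
      forall x', x' \in A -> op a x' = b -> x' = x) ->
  odd #|[set x in A | op x x == b]| = odd #|A|.
Proof.
move=> Adiv.
pose P := [set p : T * T | [&& p.1 \in A, p.2 \in A & op p.1 p.2 == b]].
pose swap (p : T * T) := (p.2, p.1).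
have swapK : involutive swap by case.
have swapP : {in P, forall p, swap p \in P}.
  by case=> x y; rewrite !inE /= opC andbCA.
have cardP : #|P| = #|A|.
  have -> : A = fst @: P.
    apply/setP => a; apply/idP/imsetP => [aA|[[x y]]].
      have [x [[xA axb] _]] := Adiv a aA.
      by exists (a, x); rewrite // inE /= aA xA axb eqxx.
    by rewrite inE /= => /and3P[xA _ _] ->.
  apply/esym/card_in_imset => -[x1 y1] [x2 y2]; rewrite !inE /=.
  move=> /and3P[x1A y1A /eqP e1] /and3P[_ y2A /eqP e2] /= x12; subst x2.
  by have [z [_ zU]] := Adiv x1 x1A; rewrite (zU _ y1A e1) (zU _ y2A e2).
have cardF : #|[set p in P | swap p == p]| = #|[set x in A | op x x == b]|.
  have -> : [set p in P | swap p == p] =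
            (fun x => (x, x)) @: [set x in A | op x x == b].
    apply/setP => -[x y]; rewrite !inE /=; apply/idP/imsetP.
      case/andP => /and3P[xA _ xyb] /eqP[yx _]; subst y.
      by exists x; rewrite ?inE ?xA.
    by case=> z; rewrite inE => /andP[zA zzb] [-> ->]; rewrite zA zzb eqxx.
  by apply: card_imset => x y [].
by rewrite -cardF -cardP odd_card_fixed_involution.
Qed.

Lemma odd_loop_sqr_inj (e : T) :
  is_loop op e -> odd #|T| -> injective (fun x => op x x).
Proof.
move=> Qloop oddT; apply: fin_surj_inj => b.
have [_ [_ [rdivT _]]] := setT_subloop Qloop.
have := odd_card_sqrt (fun a aT => rdivT a b aT (in_setT b)).
rewrite cardsT oddT => odd_roots.
have /card_gt0P[x] : 0 < #|[set x in [set: T] | op x x == b]|.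
  by move: odd_roots; case: #|_|.
by rewrite !inE => /eqP; exists x.
Qed.

Lemma odd_card_subloop (e : T) (S : {set T}) :
  is_loop op e -> odd #|T| -> is_subloop op e S -> odd #|S|.
Proof.
move=> Qloop oddT [eS [_ [rdivS _]]].
have ee : op e e = e by case: Qloop => /(_ e)[].
rewrite -(odd_card_sqrt (fun a aS => rdivS a e aS eS)).
set E := [set x in S | _].
suff -> : E = [set e] by rewrite cards1.
apply/setP => s; rewrite !inE; apply/andP/eqP => [[_ /eqP ss]|->]; last first.
  by rewrite eS ee.
by apply: (odd_loop_sqr_inj Qloop oddT); rewrite /= ss ee.
Qed.

End CommutativeLoop.

Theorem corollary3p2 (T : finType) (op : T -> T -> T) (e : T) :
  is_loop op e -> is_commutative op ->
  ((exists S : {set T}, is_subloop op e S /\ ~~ odd #|S|) <-> ~~ odd #|T|).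
Proof.
move=> Qloop opC; split=> [[S [subS evenS]]|evenT].
  move: evenS; apply: contra => oddT.
  exact: (odd_card_subloop opC Qloop oddT subS).
by exists setT; split; [exact: setT_subloop | rewrite cardsT].
Qed.
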